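(* Let $M$ be a matroid on $E$ whose dual is transversal with presentation $\mathcal A=(A_1,\ldots,A_r)$, $r=r^*(M)$; let $e\in E$, ordered so that for some $k\in[r]$, $e\in A_i$ iff $i\le k$. Let $G$ be a minimal $(e,\mathcal A)$-presenting graph on vertex set $[k]$ (identity presenting map), and suppose $G$ is a tree with edge set $\{\{i_1,j_1\},\ldots,\{i_{k-1},j_{k-1}\}\}$. Define $B_m=A_{i_m}\cup A_{j_m}-e$ for $1\le m\le k-1$ and $B_m=A_{m+1}$ for $k\le m\le r-1$. Choose $J\subseteq[r-1]$ and suppose $(M\backslash e)^*$ has presentation $\mathcal C=(C_1,\ldots,C_{r-1})$, where $C_m=B_m$ if $m\notin J$ and $C_m=\mathrm{cl}_{M\backslash e}(B_m)$ if $m\in J$. Let $j\in J$. Then $(C_1,\ldots,C_{j-1},B_j,C_{j+1},\ldots,C_{r-1})$ is also a presentation of $(M\backslash e)^*$.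
   Context: A presentation $\mathcal A$ of a transversal matroid $N$ means $N=M[\mathcal A]$, whose independent sets are the partial transversals of $\mathcal A$. For $X\subseteq E$: $\mathcal A(X)=\{i:A_i\subseteq X\}$ and $\mathcal A_e(X)=\{i\in\mathcal A(X): e\in A_i\}$; $G[U]$ is the induced subgraph on $U$. A graph with vertex set $\mathcal A_e(E)=[k]$ is $(e,\mathcal A)$-presenting if for all distinct $i,j$ the graph $G[\mathcal A_e(\mathrm{cl}_M(A_i\cup A_j))]$ is connected; minimal if deleting any one edge destroys this property. *)

From mathcomp Require Import all_boot.
Set Implicit Arguments. Unset Strict Implicit. Unset Printing Implicit Defensive.

Section Matroids.
Variable T : finType.

Record mdata := MData { ground : {set T}; indep : {set T} -> bool }.

Definition is_matroid (M : mdata) : Prop :=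
  [/\ indep M set0,
      (forall X : {set T}, indep M X -> X \subset ground M),
      (forall X Y : {set T}, indep M Y -> X \subset Y -> indep M X) &
      (forall X Y : {set T}, indep M X -> indep M Y -> #|X| < #|Y| ->
          exists2 y, y \in Y :\: X & indep M (y |: X))].

Definition rank (M : mdata) (X : {set T}) : nat :=
  \max_(Y : {set T} | (Y \subset X) && indep M Y) #|Y|.

Definition mclosure (M : mdata) (X : {set T}) : {set T} :=
  [set x in ground M | rank M (x |: X) == rank M X].

Definition is_basis (M : mdata) (B : {set T}) : bool :=
  indep M B && [forall x in ground M :\: B, ~~ indep M (x |: B)].

Definition dual (M : mdata) : mdata :=
  MData (ground M)
        (fun X => (X \subset ground M) &&
                  [exists B : {set T}, is_basis M B && [disjoint X & B]]).

Definition delete (M : mdata) (e : T) : mdata :=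
  MData (ground M :\ e) (fun X => indep M X && (e \notin X)).

Definition ptrans (n : nat) (A : 'I_n -> {set T}) (X : {set T}) : bool :=
  [exists f : {ffun T -> option 'I_n},
     [forall x in X, forall y in X, (f x == f y) ==> (x == y)] &&
     [forall x in X, exists i, (f x == Some i) && (x \in A i)]].

Definition presents (N : mdata) (n : nat) (A : 'I_n -> {set T}) : Prop :=
  (forall i, A i \subset ground N) /\
  (forall X, indep N X = (X \subset ground N) && ptrans A X).

Definition Ae (n : nat) (A : 'I_n -> {set T}) (e : T) (X : {set T}) : {set 'I_n} :=
  [set i | (A i \subset X) && (e \in A i)].

Definition is_graph_on (n : nat) (Eg : {set {set 'I_n}}) (V : {set 'I_n}) : Prop :=
  forall f, f \in Eg -> exists x y, [/\ x != y, x \in V, y \in V & f = [set x; y]].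

Definition connected_on (n : nat) (Eg : {set {set 'I_n}}) (U : {set 'I_n}) : Prop :=
  forall x y, x \in U -> y \in U ->
    connect [rel a b | [&& a \in U, b \in U & [set a; b] \in Eg]] x y.

Definition presenting (M : mdata) (e : T) (n : nat) (A : 'I_n -> {set T})
    (Eg : {set {set 'I_n}}) : Prop :=
  is_graph_on Eg (Ae A e (ground M)) /\
  forall i j, i \in Ae A e (ground M) -> j \in Ae A e (ground M) -> i != j ->
    connected_on Eg (Ae A e (mclosure M (A i :|: A j))).

Definition min_presenting (M : mdata) (e : T) (n : nat) (A : 'I_n -> {set T})
    (Eg : {set {set 'I_n}}) : Prop :=
  presenting M e A Eg /\ forall f, f \in Eg -> ~ presenting M e A (Eg :\ f).

Definition is_tree (n : nat) (Eg : {set {set 'I_n}}) (V : {set 'I_n}) : Prop :=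
  is_graph_on Eg V /\ connected_on Eg V /\
  ~ exists s : seq 'I_n, [/\ uniq s, 3 <= size s &
                           cycle [rel a b | [set a; b] \in Eg] s].

(* The sets B_m (0-indexed, m < r-1):
   B_m = A_{i_m} u A_{j_m} - e  for m < k-1,   B_m = A_{m+1} otherwise. *)
Definition Bfam (r k : nat) (A : 'I_r -> {set T}) (e : T) (ei ej : nat -> 'I_r)
    (m : 'I_r.-1) : {set T} :=
  if val m < k.-1 then (A (ei m) :|: A (ej m)) :\ e
  else if insub (val m).+1 is Some i then A i else set0.
  (* the set0 branch never occurs since m.+1 < r *)

End Matroids.

From mathcomp Require Import all_boot zify.
Set Implicit Arguments. Unset Strict Implicit. Unset Printing Implicit Defensive.

(* An independent set X of (M\e)^* extends to the independent set e ∪ X of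
   M^*: since e is not a coloop of M, every basis of M\e is a basis of M.
   Hence e ∪ X has a matching into A; let t be the index matched to e.
   Rooting the connected graph G at t, every other index i < k is sent to an
   edge joining i to a vertex closer to t (distinct vertices get distinct
   edges), and every index i >= k to i - 1.  This turns the matching of X
   into a matching into (B_m), so the independent sets of (M\e)^* are partial
   transversals of B.  As B_m ⊆ C_m, every family sandwiched between B and C
   then presents (M\e)^*. *)

Section Transversals.
Variable T : finType.

Lemma ptransP n (A : 'I_n -> {set T}) (X : {set T}) :
  reflect (exists2 h : T -> option 'I_n, {in X &, injective h} &
             forall x, x \in X -> exists2 i, h x = Some i & x \in A i)
          (ptrans A X).
Proof.
apply: (iffP existsP) => [[f /andP[/forallP f_inj /forallP f_in]] | [h h_inj h_in]].
- exists f => [x y xX yX fxy | x xX].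
  + move/implyP: (f_inj x) => /(_ xX) /forallP /(_ y) /implyP /(_ yX).
    by rewrite fxy eqxx => /eqP.
  + move/implyP: (f_in x) => /(_ xX) /existsP[i /andP[/eqP fx xA]].
    by exists i.
- exists (finfun h); apply/andP; split; apply/forallP => x; apply/implyP => xX.
  + apply/forallP => y; apply/implyP => yX; apply/implyP.
    by rewrite !ffunE => /eqP /h_inj ->.
  + have [i hx xA] := h_in x xX.
    by apply/existsP; exists i; rewrite ffunE hx eqxx.
Qed.

Lemma ptrans1 n (A : 'I_n -> {set T}) (x : T) (i : 'I_n) :
  x \in A i -> ptrans A [set x].
Proof.
move=> xA; apply/ptransP; exists (fun _ => Some i) => [y z /set1P-> /set1P->|y /set1P->] //.
by exists i.
Qed.

Lemma ptrans_reindex n p (A : 'I_n -> {set T}) (B : 'I_p -> {set T})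
    (g : 'I_n -> option 'I_p) (X : {set T}) :
  (forall i i' j, g i = Some j -> g i' = Some j -> i = i') ->
  (forall i x, x \in X -> x \in A i -> exists2 j, g i = Some j & x \in B j) ->
  ptrans A X -> ptrans B X.
Proof.
move=> g_inj gAB /ptransP[h h_inj h_in]; apply/ptransP.
exists (fun x => obind g (h x)) => [x y xX yX | x xX].
- have [i hx xA] := h_in x xX; have [i' hy yA] := h_in y yX.
  have [j gi _] := gAB i x xX xA; have [j' gi' _] := gAB i' y yX yA.
  rewrite hx hy /= gi gi' => -[jj']; apply: h_inj => //.
  by rewrite hx hy (g_inj i i' j) // gi' jj'.
- have [i hx xA] := h_in x xX; have [j gi xB] := gAB i x xX xA.
  by exists j; rewrite // hx /= gi.
Qed.

Lemma ptransS n (A B : 'I_n -> {set T}) (X : {set T}) :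
  (forall i, A i \subset B i) -> ptrans A X -> ptrans B X.
Proof.
move=> AB; apply: (ptrans_reindex (g := Some)) => [i i' j [->] [->] //|i x _ xA].
by exists i; rewrite // (subsetP (AB i)).
Qed.

Lemma ptrans_setU1 n (A : 'I_n -> {set T}) (e : T) (X : {set T}) :
  e \notin X -> ptrans A (e |: X) ->
  exists2 t, e \in A t & ptrans (fun i => if i == t then set0 else A i) X.
Proof.
move=> eX /ptransP[h h_inj h_in]; have [t he eAt] := h_in e (setU11 e X).
exists t => //; apply/ptransP; exists h => [x y xX yX | x xX].
  by apply: h_inj; rewrite setU1r.
have [i hx xA] := h_in x (setU1r e xX); exists i => //.
case: eqP => // it; rewrite it -he in hx.
have xe := h_inj x e (setU1r e xX) (setU11 e X) hx.
by rewrite xe (negbTE eX) in xX.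
Qed.

Lemma presents_between (N : mdata T) n (B D C : 'I_n -> {set T}) :
  presents N C -> (forall i, B i \subset D i) -> (forall i, D i \subset C i) ->
  (forall X, indep N X -> ptrans B X) -> presents N D.
Proof.
move=> [C_sub indC] BD DC indB; split => [i | X].
  exact: subset_trans (DC i) (C_sub i).
apply/idP/andP => [iX | [XE DX]].
  by split; [move: iX; rewrite indC => /andP[] | exact: ptransS BD (indB X iX)].
by rewrite indC XE; exact: ptransS DC DX.
Qed.

End Transversals.

Section Matroids.
Variable T : finType.
Implicit Types (M : mdata T) (B I X : {set T}) (e : T).

Lemma sub_mclosure M X : X \subset ground M -> X \subset mclosure M X.
Proof.
move=> XE; apply/subsetP => x xX; rewrite inE (subsetP XE x xX) /=.
by rewrite (setUidPr _ : [set x] :|: X = X) ?sub1set.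
Qed.

Lemma delete_matroid M e : is_matroid M -> is_matroid (delete M e).
Proof.
case=> indM0 indME indMS indMaug; split => [|X|X Y|X Y] /=.
- by rewrite indM0 inE.
- by case/andP=> /indME XE eX; rewrite subsetD1 XE.
- by case/andP=> iY eY XY; rewrite (indMS X Y) //=; apply: contra eY; apply/subsetP.
- case/andP=> iX eX /andP[iY eY] XY; have [y yYX iyX] := indMaug X Y iX iY XY.
  exists y => //; rewrite iyX !inE negb_or eX andbT.
  by apply: contraNneq eY => ->; case/setDP: yYX.
Qed.

Lemma basis_card_max M B I : is_matroid M -> is_basis M B -> indep M I -> #|I| <= #|B|.
Proof.
move=> [_ indME _ indMaug] /andP[iB /forallP B_max] iI; rewrite leqNgt.
apply/negP => ltBI; have [y /setDP[yI yB] iyB] := indMaug _ _ iB iI ltBI.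
have yE : y \in ground M := subsetP (indME _ iyB) y (setU11 y B).
by move/implyP: (B_max y); rewrite !inE yB yE iyB => /(_ isT).
Qed.

Lemma basis_delete M e B :
  is_matroid M -> indep (dual M) [set e] -> is_basis (delete M e) B -> is_basis M B.
Proof.
move=> matM /andP[_ /existsP[B0 /andP[B0_basis]]]; rewrite disjoints1 => eB0 B_basis.
have /andP[/andP[iB eB] /forallP B_max] := B_basis.
have B0B : #|B0| <= #|B|.
  apply: (basis_card_max (delete_matroid e matM)) B_basis _.
  by rewrite /= eB0 andbT; case/andP: B0_basis.
apply/andP; split => //; apply/forallP => x; apply/implyP => /setDP[xE xB].
have [-> | xe] := eqVneq x e.
  apply/negP => ieB; have := basis_card_max matM B0_basis ieB.
  by rewrite cardsU1 eB; lia.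
move/implyP: (B_max x); rewrite !inE xB xe xE => /(_ isT).
by rewrite /= !inE eq_sym (negbTE xe) (negbTE eB) andbT.
Qed.

Lemma dual_delete_indep M e X :
  is_matroid M -> indep (dual M) [set e] ->
  indep (dual (delete M e)) X -> indep (dual M) (e |: X).
Proof.
move=> matM coe /andP[XE /existsP[B /andP[B_basis XB]]].
have /andP[/andP[_ eB] _] := B_basis.
apply/andP; split.
  case/andP: coe => eE _; rewrite subUset eE.
  exact: subset_trans XE (subD1set _ _).
apply/existsP; exists B; rewrite (basis_delete matM coe B_basis).
by rewrite -setI_eq0 setIUl setU_eq0 !setI_eq0 disjoints1 eB.
Qed.

End Matroids.

Lemma connect_rank (T : finType) (R : rel T) (t : T) :
  exists d : T -> nat,
    forall v, connect R t v -> v != t -> exists2 u, R u v & d u < d v.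
Proof.
pose step (S : {set T}) := S :|: [set b | [exists a in S, R a b]].
pose layer n := iter n step [set t].
have layer_path p : path R t p -> last t p \in layer (size p).
  elim/last_ind: p => [|p y IHp]; first by rewrite inE.
  rewrite rcons_path last_rcons size_rcons => /andP[/IHp pS Ry].
  rewrite /layer iterS; apply/setUP; right.
  by rewrite inE; apply/existsP; exists (last t p); rewrite pS.
have layer_ex v : exists n, (v \in layer n) || ~~ connect R t v.
  have [/connectP[p tp ->] | ntv] := boolP (connect R t v).
    by exists (size p); rewrite layer_path.
  by exists 0; apply/orP; right.
exists (fun v => ex_minn (layer_ex v)) => v tv vt.
case: ex_minnP => n; rewrite tv orbF.
case: n => [|n]; first by rewrite inE (negbTE vt).
rewrite /layer iterS => /setUP[vn n_min | ].
  by have := n_min n; rewrite vn ltnn => /(_ isT).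
rewrite inE => /existsP[u /andP[un Ruv]] _; exists u => //.
by case: ex_minnP => m _ m_min; rewrite ltnS m_min ?un.
Qed.

Lemma pair_rank_inj (T : finType) (d : T -> nat) (u v u' v' : T) :
  [set u; v] = [set u'; v'] -> d u < d v -> d u' < d v' -> v = v'.
Proof.
move=> uv duv du'v'; apply/eqP; apply/negP => /negP vv'.
have : v \in [set u'; v'] by rewrite -uv !inE eqxx orbT.
rewrite !inE (negbTE vv') orbF => /eqP vu'.
have : v' \in [set u; v] by rewrite uv !inE eqxx orbT.
rewrite !inE [v' == v]eq_sym (negbTE vv') orbF => /eqP v'u.
by subst u' v'; have := ltn_trans duv du'v'; rewrite ltnn.
Qed.

Lemma incident_edge_choice n (L : finType) (lab : L -> {set 'I_n})
    (V : {set 'I_n}) (t : 'I_n) :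
  t \in V -> connected_on [set lab m | m : L] V ->
  exists par : 'I_n -> option L,
    [/\ forall v m, par v = Some m -> v \in lab m,
        forall v v' m, par v = Some m -> par v' = Some m -> v = v' &
        {in V :\ t, forall v, par v != None}].
Proof.
move=> tV conn.
pose R := [rel a b | [&& a \in V, b \in V & [set a; b] \in [set lab m | m : L]]].
have [d d_dec] := connect_rank R t.
pose Q v m := [exists u, (lab m == [set u; v]) && (d u < d v)].
pose par v := if v \in V :\ t then [pick m | Q v m] else None.
have parQ v m : par v = Some m -> exists2 u, lab m = [set u; v] & d u < d v.
  rewrite /par; case: ifP => // _; case: pickP => // m' /existsP[u /andP[/eqP lu du]].
  by case=> <-; exists u.
exists par; split.
- by move=> v m /parQ[u -> _]; rewrite !inE eqxx orbT.
- move=> v v' m /parQ[u lu du] /parQ[u' lu' du'].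
  by apply: (pair_rank_inj (d := d)) du du'; rewrite -lu -lu'.
- move=> v vVt; rewrite /par vVt; case: pickP => // noQ.
  have /setD1P[vt vV] := vVt.
  have [u /and3P[_ _ /imsetP[m _ lm]] duv] := d_dec v (conn t v tV vV) vt.
  by have := noQ m; rewrite /Q; case: existsP => // -[]; exists u; rewrite -lm eqxx.
Qed.

Section TreeReindexing.
Variables (T : finType) (r k : nat) (A : 'I_r -> {set T}) (e : T).
Variables (ei ej : nat -> 'I_r).
Hypothesis eA : forall i : 'I_r, (e \in A i) = (i < k).
Local Notation B := (Bfam k A e ei ej).

Lemma Bfam_low (m : 'I_r.-1) : m < k.-1 -> B m = (A (ei m) :|: A (ej m)) :\ e.
Proof. by rewrite /Bfam => ->. Qed.

Lemma Bfam_high (m : 'I_r.-1) (i : 'I_r) :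
  k.-1 <= m -> i = m.+1 :> nat -> B m = A i.
Proof. by move=> km im; rewrite /Bfam ltnNge km /= -im valK. Qed.

Lemma Bfam_sub (E : {set T}) (m : 'I_r.-1) :
  (forall i, A i \subset E) -> B m \subset E :\ e.
Proof.
move=> AE; have [mk | km] := ltnP m k.-1.
  by rewrite Bfam_low // setSD // subUset !AE.
have mr : m.+1 < r by have := ltn_ord m; lia.
rewrite (Bfam_high (i := Ordinal mr)) //; apply/subsetP => x xA.
rewrite !inE (subsetP (AE _) x xA) andbT; apply: contraTneq xA => ->.
by rewrite eA /=; lia.
Qed.

Lemma ptrans_Bfam (X : {set T}) :
  k <= r ->
  connected_on [set [set ei (val m); ej (val m)] | m : 'I_k.-1] [set i | e \in A i] ->
  e \notin X -> ptrans A (e |: X) -> ptrans B X.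
Proof.
move=> kr conn eX /(ptrans_setU1 eX)[t eAt tX].
have k0 : 0 < k by move: eAt; rewrite eA; lia.
have kr' : k.-1 <= r.-1 by lia.
have tV : t \in [set i | e \in A i] by rewrite inE.
have [par [par_lab par_inj par_def]] :=
  incident_edge_choice (lab := fun m : 'I_k.-1 => [set ei m; ej m]) tV conn.
pose g (i : 'I_r) := if i < k then omap (widen_ord kr') (par i)
                     else insub i.-1.
have g_inj i i' j : g i = Some j -> g i' = Some j -> i = i'.
  rewrite /g; case: ltnP => ik; case: ltnP => i'k.
  - case pi: (par i) => [a|] //= [<-]; case pi': (par i') => [a'|] //=.
    move=> [] a'a.
    by apply: par_inj pi _; rewrite pi'; congr Some; apply: val_inj.
  - case: (par i) => [a|] //= [<-]; case: insubP => // o _ vo.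
    move=> [] oa; have : a = i'.-1 :> nat by rewrite -vo oa.
    by have := ltn_ord a; lia.
  - case: insubP => // o _ vo [<-]; case: (par i') => [a|] //=.
    move=> [] ao; have : a = i.-1 :> nat by rewrite -vo -ao.
    by have := ltn_ord a; lia.
  - case: insubP => // o _ vo [<-]; case: insubP => // o' _ vo'.
    move=> [] o'o; rewrite o'o in vo'; apply: ord_inj.
    by have : o = i.-1 :> nat := vo; have : o = i'.-1 :> nat := vo'; lia.
have g_B i x : i != t -> x != e -> x \in A i -> exists2 j, g i = Some j & x \in B j.
  rewrite /g => it xe xA; case: ltnP => ik.
    have iVt : i \in [set i | e \in A i] :\ t by rewrite !inE it eA ik.
    case pi: (par i) (par_def i iVt) => [a|] // _.
    exists (widen_ord kr' a) => //; rewrite Bfam_low ?ltn_ord //=.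
    by move: (par_lab i a pi); rewrite !inE => /orP[]/eqP <-; rewrite xe xA ?orbT.
  have ir : i.-1 < r.-1 by have := ltn_ord i; lia.
  case: insubP => [o _ vo|]; last by rewrite ir.
  have oi : o = i.-1 :> nat := vo.
  by exists o; rewrite // (Bfam_high (i := i)) //; lia.
apply: (ptrans_reindex g_inj) tX => i x xX.
case: eqP => [_|/eqP it]; first by rewrite inE.
by apply: g_B => //; apply: contraNneq eX => <-.
Qed.

End TreeReindexing.

Theorem lemma3p7 (T : finType) (M : mdata T) (r k : nat)
  (A : 'I_r -> {set T}) (e : T) (ei ej : nat -> 'I_r)
  (J : {set 'I_r.-1}) (j : 'I_r.-1) :
  is_matroid M ->
  presents (dual M) A ->
  r = rank (dual M) (ground M) ->
  e \in ground M ->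
  0 < k <= r ->
  (forall i : 'I_r, (e \in A i) = (val i < k)) ->
  min_presenting M e A [set [set ei (val m); ej (val m)] | m : 'I_k.-1] ->
  is_tree [set [set ei (val m); ej (val m)] | m : 'I_k.-1] (Ae A e (ground M)) ->
  presents (dual (delete M e))
    (fun m => if m \in J then mclosure (delete M e) (Bfam k A e ei ej m)
              else Bfam k A e ei ej m) ->
  j \in J ->
  presents (dual (delete M e))
    (fun m => if m == j then Bfam k A e ei ej m
              else if m \in J then mclosure (delete M e) (Bfam k A e ei ej m)
              else Bfam k A e ei ej m).
Proof.
move=> matM [A_sub indA] _ eE /andP[k0 kr] eA _ [_ [conn _]] presC _.
have coe : indep (dual M) [set e].
  by rewrite indA sub1set eE; apply: (ptrans1 (i := Ordinal (leq_trans k0 kr))); rewrite eA.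
have BC m : Bfam k A e ei ej m \subset mclosure (delete M e) (Bfam k A e ei ej m).
  exact/sub_mclosure/Bfam_sub.
apply: (presents_between (B := Bfam k A e ei ej) presC) => [m | m | X iX].
- by case: (m == j); case: (m \in J); rewrite ?subxx ?BC.
- by case: (m == j); case: (m \in J); rewrite ?subxx ?BC.
have eX : e \notin X.
  by case/andP: iX => /subsetP XE _; apply/negP => /XE; rewrite !inE eqxx.
have AeE : Ae A e (ground M) = [set i | e \in A i].
  by apply/setP => i; rewrite !inE A_sub.
rewrite AeE in conn; apply: (ptrans_Bfam eA kr conn eX).
by move: (dual_delete_indep matM coe iX); rewrite indA => /andP[].
Qed.
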